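(* Under the setting below, for any $\epsilon>0$, $$\mathcal{N}_{\mathcal{F}}(\epsilon)\le\mathcal{Z}_{\mathcal{F}}\big(\alpha\epsilon/(8|\mathcal{O}|^{H+1}|\mathcal{A}|^HH|\mathcal{U}_A|^2|\mathcal{U}|)\big).$$
   Context: Process: finite $\mathcal{O},\mathcal{A}$, horizon $H$; histories $\tau_h=(o_1,a_1,\dots,o_h,a_h)$; policies pick $a_h\sim\pi_h(\cdot\mid\tau_{h-1},o_h)$; $\pi(\tau_h)=\prod_{l\le h}\pi_l(a_l\mid\tau_{l-1},o_l)$; $\mathbb{P}^\pi_f(\tau_H)$ is the probability of $\tau_H$ under $\pi$ in model $f$. For a model $f$, a test starting at step $h$ is $t=(o_h,\dots,o_{h+W-1},a_h,\dots,a_{h+W-2})$; $\mathbb{P}_f(t\mid\tau_{h-1})$ is the probability of observing $o_{h:h+W-1}$ when executing $a_{h:h+W-2}$ after $\tau_{h-1}$ ($0$ if unreachable). A set $\mathcal{U}_h$ of tests starting at $h$ is a core test set if for every test $t$ starting at $h$ there is a history-independent $m_{t,h;f}$ with $\mathbb{P}_f(t\mid\tau_{h-1})=\langle m_{t,h;f},q_{\tau_{h-1};f}\rangle$, $q_{\tau_{h-1};f}=[\mathbb{P}_f(u\mid\tau_{h-1})]_{u\in\mathcal{U}_h}$; $q_{0;f}=[\mathbb{P}_f(u)]_{u\in\mathcal{U}_1}$; $M_{o,a,h;f}$ has rows $m_{(o,a,u),h;f}^\top$, $u\in\mathcal{U}_{h+1}$. $\mathcal{U}_{A,h}$: action sequences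 in $\mathcal{U}_h$; $|\mathcal{U}_A|=\max_h|\mathcal{U}_{A,h}|$; $|\mathcal{U}|=\max_h|\mathcal{U}_h|$. $d_{\mathrm{PSR},h;f}$ is the rank of the matrix with entries $\mathbb{P}_f(t\mid\tau_h)$. Core matrix $K_{h;f}$ ($h\ge1$): columns $q_{\tau_h^1;f},\dots,q_{\tau_h^{d_{\mathrm{PSR},h;f}};f}$ for histories whose predictive states span all $q_{\tau_h;f}$, chosen to minimize $\|K_{h;f}^\dagger\|_{1\to1}$; $K_{0;f}=q_{0;f}$. Standing assumptions: the true process $f^*$ is in $\mathcal{F}$; every $f\in\mathcal{F}$ is a valid PSR with core test sets $\{\mathcal{U}_h\}_{h\in[H]}$ and $\|K_{h;f}^\dagger\|_{1\to1}\le1/\alpha$ for $h\in\{0,\dots,H-1\}$; every $o\in\mathcal{O}$ belongs to $\mathcal{U}_H$, and $m_{o,H;f}=e_o$ (standard basis vector indexing $o$ in $\mathcal{U}_H$). Convention: for $f\in\mathcal{F}$ the vectors $m_{(o,a,u),h;f}$ lie in the column space of $K_{h-1;f}$. Bracket number: a size-$N$ $\epsilon$-bracket of $\mathcal{F}$ is $\{(g_1^i,g_2^i)\}_{i=1}^N$ of real functions of (policy, $\tau_H$) with $\sum_{\tau_H}|g_1^i(\pi,\tau_H)-g_2^i(\pi,\tau_H)|\le\epsilon$ for all $\pi,i$, such that each $f\in\mathcal{F}$ has some $i$ with $g_1^i(\pi,\tau_H)\le\mathbb{P}^\pi_f(\tau_H)\le g_2^i(\pi,\tau_H)$ for all $\tau_H,\pi$;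 $\mathcal{N}_{\mathcal{F}}(\epsilon)$ is the minimal $N$. Covering number: $\mathcal{Z}_{\mathcal{F}}(\epsilon)$ is the minimal $n$ such that there is a set $\mathcal{F}'$ of $n$ parameter tuples $\{m'_{(o,a,u),h},q'_0\}$ (not necessarily valid PSRs) such that for every $f\in\mathcal{F}$ some element satisfies $\max_{o,a,h\in[H-1],u\in\mathcal{U}_{h+1}}\|m_{(o,a,u),h;f}-m'_{(o,a,u),h}\|_\infty\le\epsilon$ and $\|q_{0;f}-q'_0\|_\infty\le\epsilon$. *)

From HB Require Import structures.
From mathcomp Require Import all_boot all_order all_algebra.
Set Implicit Arguments. Unset Strict Implicit. Unset Printing Implicit Defensive.
Import Order.TTheory GRing.Theory Num.Theory.
Local Open Scope ring_scope.

Section PSR.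
Variables (R : realFieldType) (O A : finType).

(* A history tau_h = (o_1,a_1,...,o_h,a_h) is a sequence of (o,a) pairs. *)

(* A (general) sequential process is given by its observation kernels:
   f tau o = probability of observing o at step (size tau).+1 after tau. *)
Definition proc := seq (O * A) -> O -> R.

Definition valid_proc (f : proc) : Prop :=
  (forall tau o, 0 <= f tau o) /\ (forall tau, \sum_(o : O) f tau o = 1).

(* P_f(o_{1:h} | a_{1:h-1}) for tau = tau_h (the last action is irrelevant) *)
Definition prefix_prob (f : proc) (tau : seq (O * A)) : R :=
  \prod_(i < size tau) f (take i tau) (tnth (in_tuple tau) i).1.

(* A test starting at h: (o_h, [(a_h,o_{h+1}); ...; (a_{h+W-2},o_{h+W-1})]). *)
Definition test := (O * seq (A * O))%type.

Definition valid_test (H h : nat) (t : test) : bool := (h + size t.2 <= H)%N.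

Fixpoint test_prob_raw (f : proc) (tau : seq (O * A)) (o : O)
    (r : seq (A * O)) : R :=
  match r with
  | [::] => f tau o
  | (a, o') :: r' => f tau o * test_prob_raw f (rcons tau (o, a)) o' r'
  end.

(* P_f(t | tau_{h-1}), 0 if tau_{h-1} is unreachable *)
Definition test_prob (f : proc) (t : test) (tau : seq (O * A)) : R :=
  if prefix_prob f tau == 0 then 0 else test_prob_raw f tau t.1 t.2.

(* Policies: pi tau_{h-1} o_h a_h = pi_h(a_h | tau_{h-1}, o_h). *)
Definition policy := seq (O * A) -> O -> A -> R.

Definition valid_policy (pi : policy) : Prop :=
  (forall tau o a, 0 <= pi tau o a) /\ (forall tau o, \sum_(a : A) pi tau o a = 1).

Definition policy_prob (pi : policy) (tau : seq (O * A)) : R :=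
  \prod_(i < size tau)
     pi (take i tau) (tnth (in_tuple tau) i).1 (tnth (in_tuple tau) i).2.

Definition traj_prob (f : proc) (pi : policy) (tau : seq (O * A)) : R :=
  policy_prob pi tau * prefix_prob f tau.

Definition represents (f : proc) (U : nat -> seq test) (h : nat) (t : test)
    (m : test -> R) : Prop :=
  forall tau : (h.-1).-tuple (O * A),
    test_prob f t tau = \sum_(u <- U h) m u * test_prob f u tau.

(* m lies in the span of the predictive states q_{tau_{h-1}}
   (= the column space of the core matrix K_{h-1}) *)
Definition in_qspan (f : proc) (U : nat -> seq test) (h : nat)
    (m : test -> R) : Prop :=
  exists c : (h.-1).-tuple (O * A) -> R,
    forall u, u \in U h -> m u = \sum_tau c tau * test_prob f u tau.

(* m = m_{t,h;f} (with the column-space convention, which makes it unique) *)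
Definition psr_m (f : proc) (U : nat -> seq test) (h : nat) (t : test)
    (m : test -> R) : Prop :=
  represents f U h t m /\ in_qspan f U h m.

Definition core_test_set (H : nat) (f : proc) (U : nat -> seq test) (h : nat)
    : Prop :=
  uniq (U h) /\ (forall u, u \in U h -> valid_test H h u) /\
  (forall t, valid_test H h t -> exists m, represents f U h t m).

Definition indep_hists (H : nat) (f : proc) (h k : nat)
    (taus : 'I_k -> h.-tuple (O * A)) : Prop :=
  forall c : 'I_k -> R,
    (forall t, valid_test H h.+1 t ->
       \sum_(i < k) c i * test_prob f t (taus i) = 0) ->
    forall i, c i = 0.

(* d = d_{PSR,h;f}: rank of the matrix (P_f(t | tau_h))_{t, tau_h} *)
Definition psr_rank (H : nat) (f : proc) (h d : nat) : Prop :=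
  (exists taus : 'I_d -> h.-tuple (O * A), @indep_hists H f h d taus) /\
  (forall taus : 'I_d.+1 -> h.-tuple (O * A), ~ @indep_hists H f h d.+1 taus).

Definition penrose m n (K : 'M[R]_(m, n)) (X : 'M[R]_(n, m)) : Prop :=
  [/\ K *m X *m K = K, X *m K *m X = X,
      (K *m X)^T = K *m X & (X *m K)^T = X *m K].

(* induced l1 -> l1 operator norm = maximal absolute column sum *)
Definition norm11 m n (X : 'M[R]_(m, n)) : R :=
  \big[Num.max/0]_(j < n) \sum_(i < m) `|X i j|.

Definition qcols (f : proc) (U : nat -> seq test) (h d : nat)
    (taus : 'I_d -> seq (O * A)) : 'M[R]_(size (U h), d) :=
  \matrix_(i < size (U h), j < d) test_prob f (tnth (in_tuple (U h)) i) (taus j).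

(* ||K_{0;f}^dagger||_{1->1} <= b, with K_{0;f} = q_{0;f} *)
Definition K0_bound (f : proc) (U : nat -> seq test) (b : R) : Prop :=
  exists X, penrose (qcols f U 1 (fun _ : 'I_1 => [::])) X /\ norm11 X <= b.

(* ||K_{h;f}^dagger||_{1->1} <= b for h >= 1, where K_{h;f} is a minimizing
   choice of d_{PSR,h;f} histories whose predictive states span all q_{tau_h} *)
Definition Kh_bound (H : nat) (f : proc) (U : nat -> seq test) (h : nat)
    (b : R) : Prop :=
  exists d, psr_rank H f h d /\
  exists taus : 'I_d -> h.-tuple (O * A),
    (forall tau : h.-tuple (O * A), exists c : 'I_d -> R,
       forall u, u \in U h.+1 ->
         test_prob f u tau = \sum_(j < d) c j * test_prob f u (taus j)) /\
    exists X, penrose (qcols f U h.+1 (fun j => tval (taus j))) X /\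
              norm11 X <= b.

Definition psr_model (H : nat) (U : nat -> seq test) (alpha : R) (f : proc)
    : Prop :=
  [/\ valid_proc f,
      (forall h, (1 <= h <= H)%N -> core_test_set H f U h),
      (forall o : O, (o, [::]) \in U H),
      K0_bound f U (1 / alpha) &
      (forall h, (1 <= h <= H.-1)%N -> Kh_bound H f U h (1 / alpha))].

Definition is_bracket (H : nat) (F : proc -> Prop) (eps : R) (N : nat)
    (g1 g2 : 'I_N -> policy -> H.-tuple (O * A) -> R) : Prop :=
  (forall i pi, valid_policy pi ->
     \sum_(tau : H.-tuple (O * A)) `|g1 i pi tau - g2 i pi tau| <= eps) /\
  (forall f, F f -> exists i, forall pi, valid_policy pi ->
     forall tau : H.-tuple (O * A),
       g1 i pi tau <= traj_prob f pi tau <= g2 i pi tau).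

(* there is an eps-bracket of size N, i.e. N_F(eps) <= N *)
Definition has_bracket (H : nat) (F : proc -> Prop) (eps : R) (N : nat) : Prop :=
  exists g1 g2, @is_bracket H F eps N g1 g2.

(* m' i o a u h = m'_{(o,a,u),h} in R^{U_h}, q' i = q'_0 in R^{U_1} *)
Definition is_cover (H : nat) (U : nat -> seq test) (F : proc -> Prop)
    (eps : R) (n : nat)
    (m' : 'I_n -> O -> A -> test -> nat -> test -> R) (q' : 'I_n -> test -> R)
    : Prop :=
  forall f, F f -> exists i,
    (forall o a h u, (1 <= h <= H.-1)%N -> u \in U h.+1 ->
       exists m, psr_m f U h (o, (a, u.1) :: u.2) m /\
         forall v, v \in U h -> `|m v - m' i o a u h v| <= eps) /\
    (forall u, u \in U 1%N -> `|test_prob f u [::] - q' i u| <= eps).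

(* there is an eps-cover of size n, i.e. Z_F(eps) <= n *)
Definition has_cover (H : nat) (U : nat -> seq test) (F : proc -> Prop)
    (eps : R) (n : nat) : Prop :=
  exists m' q', @is_cover H U F eps n m' q'.

Definition UA_size (H : nat) (U : nat -> seq test) : nat :=
  \max_(h < H) size (undup [seq map fst u.2 | u <- U h.+1]).
Definition U_size (H : nat) (U : nat -> seq test) : nat :=
  \max_(h < H) size (U h.+1).

End PSR.

(* Choose, for every cover element, one model of the class that is close to it;
   its trajectory distribution widened by [delta = eps / (2 |O|^H |A|^H)] on each
   side is the bracket.  Two models [f], [g] close to the same cover element have
   operators [m] and initial predictive states within [2e] of each other.  The
   joint probability of a history followed by a test satisfies
   [P(tau o a, u) = sum_v m_(o,a,u)(v) P(tau, v)], so [P_f - P_g] telescopes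
   over the [H] steps of a history: each step adds [sum_v (m_f - m_g)(v) P_g(tau, v)],
   of size at most [2e |U_A|], which is then carried to the end by a functional
   [l] spanned by predictive states and bounded by one on them.  The Penrose
   identities for the core matrix give [|<l, x>| <= |x|_1 / alpha], so
   [|P_f(tau) - P_g(tau)| <= 2 e H |U_A| |U| / alpha], which the cover radius
   makes at most [delta]. *)

From HB Require Import structures.
From mathcomp Require Import all_boot all_order all_algebra.
From Stdlib Require Import ClassicalEpsilon.
From mathcomp Require Import ring.
Set Implicit Arguments. Unset Strict Implicit. Unset Printing Implicit Defensive.
Import Order.TTheory GRing.Theory Num.Theory.
Local Open Scope ring_scope.

Lemma sumr_const_seq (V : nmodType) (I : Type) (s : seq I) (x : V) :
  \sum_(i <- s) x = x *+ size s.
Proof. by rewrite big_const_seq count_predT; elim: (size s) => //= n ->; rewrite mulrS. Qed.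

Lemma ler_sum_uniq_subset (R : numDomainType) (T : eqType) (s1 s2 : seq T) (F : T -> R) :
  uniq s1 -> {subset s1 <= s2} -> (forall x, 0 <= F x) ->
  \sum_(x <- s1) F x <= \sum_(x <- s2) F x.
Proof.
elim: s1 s2 => [|x s1 IHs] s2 /= s1_uniq s1_sub F_ge0.
  by rewrite big_nil; apply: sumr_ge0.
case/andP: s1_uniq => x_notin s1_uniq.
have x_in : x \in s2 by apply: s1_sub; rewrite inE eqxx.
rewrite [leRHS](perm_big _ (perm_to_rem x_in)) !big_cons lerD2l.
apply: IHs => // y y_in; apply: rem_mem; first by apply: contraNneq x_notin => <-.
by apply: s1_sub; rewrite inE y_in orbT.
Qed.

Lemma sum_partition_undup (R : nmodType) (I T : eqType) (s : seq I) (key : I -> T)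
    (F : I -> R) :
  \sum_(i <- s) F i = \sum_(k <- undup (map key s)) \sum_(i <- s | key i == k) F i.
Proof.
rewrite (exchange_big_dep xpredT) //=; apply: eq_big_seq => i i_in.
rewrite -big_filter (@eq_filter _ _ (pred1 (key i))) => [|k]; last by rewrite /= eq_sym.
rewrite filter_pred1_uniq ?undup_uniq ?big_seq1 // mem_undup.
exact: map_f.
Qed.

Lemma choose_representatives (I X : Type) (F : X -> Prop) (P : I -> X -> Prop) (x0 : X) :
  F x0 -> exists r : I -> X, forall x i, F x -> P i x -> F (r i) /\ P i (r i).
Proof.
move=> F_x0.
have r_ex i : exists y, (exists x, F x /\ P i x) -> F y /\ P i y.
  case: (excluded_middle_informative (exists x, F x /\ P i x)) => [[x Px]|no_x].
    by exists x => _.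
  by exists x0 => /no_x.
have [r r_spec] := choice _ r_ex.
by exists r => x i F_x P_x; apply: r_spec; exists x.
Qed.

Section Process.
Variables (R : realFieldType) (O A : finType).
Implicit Types (f : proc R O A) (s : seq (O * A)) (u : test O A).

Lemma valid_proc_bounds f : valid_proc f -> forall s o, 0 <= f s o <= 1.
Proof.
case=> f_ge0 f_sum1 s o; rewrite f_ge0 /= -(f_sum1 s) (bigD1 o) //= lerDl.
by apply: sumr_ge0 => o' _; apply: f_ge0.
Qed.

Lemma valid_proc_support f : valid_proc f -> forall s, exists o, f s o != 0.
Proof.
case=> _ f_sum1 s; apply/existsP; apply: contraT => /existsPn f0.
move: (f_sum1 s); rewrite big1 => [/eqP|o _]; first by rewrite eq_sym oner_eq0.
by apply/eqP; rewrite -[_ == _]negbK f0.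
Qed.

Lemma prefix_prob_nil f : prefix_prob f [::] = 1.
Proof. by rewrite /prefix_prob big_ord0. Qed.

Lemma prefix_probE f s x0 :
  prefix_prob f s = \prod_(0 <= i < size s) f (take i s) (nth x0 s i).1.
Proof. by rewrite big_mkord; apply: eq_bigr => i _; rewrite (tnth_nth x0). Qed.

Lemma prefix_prob_rcons f s x :
  prefix_prob f (rcons s x) = prefix_prob f s * f s x.1.
Proof.
rewrite !(prefix_probE _ _ x) size_rcons big_nat_recr //=; congr (_ * _).
  rewrite big_seq_cond [RHS]big_seq_cond; apply: eq_bigr => i.
  rewrite mem_index_iota andbT => /andP[_ lt_i_s].
  by rewrite -cats1 take_cat lt_i_s nth_cat lt_i_s.
by rewrite -cats1 take_size_cat // nth_cat ltnn subnn.
Qed.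

Lemma prefix_prob_bounds f : valid_proc f -> forall s, 0 <= prefix_prob f s <= 1.
Proof.
move=> f_valid s; rewrite prodr_ile1 ?andbT => [|i _]; last exact: valid_proc_bounds.
apply: prodr_ge0 => i _.
by case/andP: (valid_proc_bounds f_valid (take i s) (tnth (in_tuple s) i).1).
Qed.

Lemma test_prob_raw_bounds f : valid_proc f ->
  forall r s o, 0 <= test_prob_raw f s o r <= 1.
Proof.
move=> f_valid; elim=> [|[a o'] r IHr] s o /=; first exact: valid_proc_bounds.
case/andP: (valid_proc_bounds f_valid s o) => f0 f1.
case/andP: (IHr (rcons s (o, a)) o') => r0 r1.
by rewrite mulr_ge0 //= mulr_ile1.
Qed.

Lemma test_prob_bounds f : valid_proc f -> forall u s, 0 <= test_prob f u s <= 1.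
Proof.
move=> f_valid u s; rewrite /test_prob; case: eqP => _; first by rewrite lexx ler01.
exact: test_prob_raw_bounds.
Qed.

Lemma test_prob_le_raw f : valid_proc f ->
  forall u s, test_prob f u s <= test_prob_raw f s u.1 u.2.
Proof.
move=> f_valid u s; rewrite /test_prob; case: eqP => _ //.
by case/andP: (test_prob_raw_bounds f_valid u.2 s u.1).
Qed.

Lemma test_prob_cons f s o a u :
  test_prob f (o, (a, u.1) :: u.2) s = f s o * test_prob f u (rcons s (o, a)).
Proof.
rewrite /test_prob /= prefix_prob_rcons /=.
have [->|p0] := eqP; first by rewrite mul0r eqxx mulr0.
have [->|f0] := eqVneq (f s o) 0; first by rewrite !mul0r.
by rewrite mulf_eq0 (negPf f0) orbF; move/eqP/negPf: p0 => ->.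
Qed.

Definition joint_prob f s u : R := prefix_prob f s * test_prob f u s.

Lemma joint_prob_nil f u : joint_prob f [::] u = test_prob f u [::].
Proof. by rewrite /joint_prob prefix_prob_nil mul1r. Qed.

Lemma joint_prob_cons f s o a u :
  prefix_prob f s * test_prob f (o, (a, u.1) :: u.2) s = joint_prob f (rcons s (o, a)) u.
Proof. by rewrite test_prob_cons /joint_prob prefix_prob_rcons mulrA. Qed.

Lemma prefix_prob_rcons_joint f s x :
  prefix_prob f (rcons s x) = joint_prob f s (x.1, [::]).
Proof.
by rewrite prefix_prob_rcons /joint_prob /test_prob /=; case: eqP => [->|]; rewrite ?mul0r.
Qed.

Lemma joint_prob_ge0 f : valid_proc f -> forall s u, 0 <= joint_prob f s u.
Proof.
move=> f_valid s u; case/andP: (prefix_prob_bounds f_valid s) => p0 _.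
by case/andP: (test_prob_bounds f_valid u s) => t0 _; rewrite mulr_ge0.
Qed.

Lemma joint_prob_le_test_prob f : valid_proc f ->
  forall s u, joint_prob f s u <= test_prob f u s.
Proof.
move=> f_valid s u; case/andP: (prefix_prob_bounds f_valid s) => _ p1.
by case/andP: (test_prob_bounds f_valid u s) => t0 _; rewrite ler_piMl.
Qed.

Lemma joint_prob_represents f U h s o a u m :
  represents f U h (o, (a, u.1) :: u.2) m -> size s = h.-1 ->
  joint_prob f (rcons s (o, a)) u = \sum_(v <- U h) m v * joint_prob f s v.
Proof.
move=> m_rep s_size; rewrite -joint_prob_cons.
have s_tuple : size s == h.-1 by apply/eqP.
rewrite -[s]/(tval (Tuple s_tuple)) (m_rep (Tuple s_tuple)) mulr_sumr.
by apply: eq_bigr => v _; rewrite mulrCA.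
Qed.

Lemma policy_prob_bounds (pi : policy R O A) :
  valid_policy pi -> forall s, 0 <= policy_prob pi s <= 1.
Proof.
case=> pi_ge0 pi_sum1 s; rewrite prodr_ge0 => [|i _]; last exact: pi_ge0.
apply: prodr_ile1 => i _; set x := tnth _ i; rewrite pi_ge0 /=.
rewrite -(pi_sum1 (take i s) x.1) (bigD1 x.2) //= lerDl.
by apply: sumr_ge0 => b _; apply: pi_ge0.
Qed.

End Process.

Section TestsOfActions.
Variables (R : realFieldType) (O A : finType).

Fixpoint tests_of_actions (s : seq A) : seq (test O A) :=
  match s with
  | [::] => [seq (o, [::]) | o <- index_enum O]
  | a :: s' => [seq (o, (a, t.1) :: t.2) | o <- index_enum O, t <- tests_of_actions s']
  end.

Lemma mem_tests_of_actions (t : test O A) : t \in tests_of_actions (map fst t.2).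
Proof.
case: t => o r; elim: r o => [|[a o'] r IHr] o /=.
  exact: (map_f (fun o => (o, [::])) (mem_index_enum o)).
exact: (allpairs_f (fun o (t : test O A) => (o, (a, t.1) :: t.2))
          (mem_index_enum o) (IHr o')).
Qed.

Lemma sum_tests_of_actions (f : proc R O A) : valid_proc f ->
  forall s tau, \sum_(t <- tests_of_actions s) test_prob_raw f tau t.1 t.2 = 1.
Proof.
move=> f_valid; elim=> [|a s IHs] tau /=; first by rewrite big_map; exact: f_valid.2.
rewrite big_allpairs_dep /= -[RHS](f_valid.2 tau); apply: eq_bigr => o _.
by rewrite -mulr_sumr IHs mulr1.
Qed.

(* Tests sharing an action sequence have total probability at most one. *)
Lemma sum_test_prob_le_actions (f : proc R O A) (l : seq (test O A)) tau :
  valid_proc f -> uniq l ->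
  \sum_(v <- l) test_prob f v tau <= (size (undup [seq map fst v.2 | v <- l]))%:R.
Proof.
move=> f_valid l_uniq; rewrite (sum_partition_undup _ (fun v : test O A => map fst v.2)).
rewrite -sum1_size natr_sum; apply: ler_sum => s _.
rewrite -big_filter -(sum_tests_of_actions f_valid s tau).
apply: (@le_trans _ _
  (\sum_(v <- [seq v <- l | map fst v.2 == s]) test_prob_raw f tau v.1 v.2)).
  by apply: ler_sum => v _; apply: test_prob_le_raw.
apply: ler_sum_uniq_subset; first exact: filter_uniq.
- by move=> v; rewrite mem_filter => /andP[/eqP <- _]; apply: mem_tests_of_actions.
- by move=> v; case/andP: (test_prob_raw_bounds f_valid v.2 tau v.1).
Qed.

End TestsOfActions.

Section PseudoInverse.
Variable R : realFieldType.

Lemma norm11_col_le m n (X : 'M[R]_(m, n)) j : \sum_(i < m) `|X i j| <= norm11 X.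
Proof. exact: (le_bigmax _ (fun j => \sum_(i < m) `|X i j|) j). Qed.

(* Since [l] lies in the column space of [K] and [K X] is a symmetric
   projection onto it, [l^T x = (l^T K) (X x)]. *)
Lemma penrose_functional_bound n d (K : 'M[R]_(n, d)) (X : 'M[R]_(d, n)) (b : R)
    (l : 'I_n -> R) (w : 'I_d -> R) :
  penrose K X -> norm11 X <= b ->
  (forall i, l i = \sum_j w j * K i j) ->
  (forall j, `|\sum_i l i * K i j| <= 1) ->
  forall x : 'I_n -> R, `|\sum_i l i * x i| <= b * \sum_i `|x i|.
Proof.
case=> KXK _ KX_sym _ X_le l_col lK_le1 x.
pose lv := \col_i l i; pose xv := \col_i x i; pose wv := \col_j w j.
have lv_col : lv = K *m wv.
  apply/matrixP => i j; rewrite (ord1 j) !mxE l_col; apply: eq_bigr => k _.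
  by rewrite !mxE mulrC.
have lv_fix : (K *m X) *m lv = lv by rewrite lv_col mulmxA KXK.
have -> : \sum_i l i * x i = (lv^T *m xv) 0 0.
  by rewrite !mxE; apply: eq_bigr => i _; rewrite !mxE.
have -> : lv^T *m xv = (lv^T *m K) *m (X *m xv).
  by rewrite -{1}lv_fix trmx_mul KX_sym !mulmxA.
rewrite mxE; apply: le_trans (ler_norm_sum _ _ _) _.
apply: (@le_trans _ _ (\sum_j `|(X *m xv) j 0|)).
  apply: ler_sum => j _; rewrite normrM ler_piMl //.
  by rewrite mxE (eq_bigr (fun i => l i * K i j)) // => i _; rewrite !mxE.
apply: (@le_trans _ _ (\sum_j \sum_i `|X j i| * `|x i|)).
  apply: ler_sum => j _; rewrite mxE; apply: le_trans (ler_norm_sum _ _ _) _.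
  by apply: ler_sum => i _; rewrite !mxE normrM.
rewrite exchange_big /= mulr_sumr; apply: ler_sum => i _.
rewrite -mulr_suml mulrC [leRHS]mulrC ler_wpM2l //.
exact: le_trans (norm11_col_le X i) X_le.
Qed.

End PseudoInverse.

Section CoreMatrices.
Variables (R : realFieldType) (O A : finType).
Implicit Types (f : proc R O A) (U : nat -> seq (test O A)).

Definition pinv_bounded f U (h : nat) (b : R) : Prop :=
  exists d (taus : 'I_d -> (h.-1).-tuple (O * A)),
    (forall sig : (h.-1).-tuple (O * A), exists c : 'I_d -> R,
       forall u, u \in U h ->
         test_prob f u sig = \sum_(j < d) c j * test_prob f u (taus j)) /\
    exists X, penrose (qcols f U h (fun j => tval (taus j))) X /\ norm11 X <= b.

Lemma K0_bound_pinv f U b : K0_bound f U b -> pinv_bounded f U 1 b.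
Proof.
case=> X X_pinv; exists 1%N, (fun _ => [tuple]); split; last by exists X.
by move=> sig; exists (fun _ => 1) => u _; rewrite big_ord1 mul1r (tuple0 sig).
Qed.

Lemma Kh_bound_pinv H f U h b : Kh_bound H f U h b -> pinv_bounded f U h.+1 b.
Proof. by case=> d [_ [taus [taus_span X_pinv]]]; exists d, taus. Qed.

Definition bounded_on_states f U (k : nat) (l : test O A -> R) : Prop :=
  in_qspan f U k.+1 l /\
  forall sig : k.-tuple (O * A), `|\sum_(u <- U k.+1) l u * test_prob f u sig| <= 1.

Lemma bounded_on_states_l1 f U k b l :
  pinv_bounded f U k.+1 b -> bounded_on_states f U k l ->
  forall x : test O A -> R,
    `|\sum_(u <- U k.+1) l u * x u| <= b * \sum_(u <- U k.+1) `|x u|.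
Proof.
case=> d [taus [taus_span [X [X_pinv X_le]]]] [[c l_span] l_le1] x.
have [c' c'_span] := choice _ taus_span.
rewrite !(big_tnth _ _ (U k.+1)).
apply: (penrose_functional_bound (w := fun j => \sum_sig c sig * c' sig j) X_pinv X_le).
- move=> i; have u_in := mem_tnth i (in_tuple (U k.+1)).
  rewrite (l_span _ u_in).
  under eq_bigr => sig _ do rewrite (c'_span sig _ u_in) mulr_sumr.
  rewrite exchange_big /=; apply: eq_bigr => j _; rewrite mulr_suml.
  by apply: eq_bigr => sig _; rewrite mulrA /qcols mxE.
- move=> j; apply: le_trans (l_le1 (taus j)); rewrite (big_tnth _ _ (U k.+1)).
  by under eq_bigr => i _ do rewrite /qcols mxE.
Qed.

Lemma size_U_le_U_size H U h : (h < H)%N -> (size (U h.+1) <= U_size H U)%N.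
Proof. by move=> lt_hH; exact: (leq_bigmax (Ordinal lt_hH)). Qed.

Lemma actions_le_UA_size H U h : (h < H)%N ->
  (size (undup [seq map fst u.2 | u <- U h.+1]) <= UA_size H U)%N.
Proof. by move=> lt_hH; exact: (leq_bigmax (Ordinal lt_hH)). Qed.

Lemma UA_size_gt0 H U (o : O) : (0 < H)%N -> (o, [::]) \in U H -> (0 < UA_size H U)%N.
Proof.
move=> H_gt0 oU; have lt_H : (H.-1 < H)%N by rewrite prednK.
apply: leq_trans (actions_le_UA_size U lt_H); rewrite prednK //.
have : [::] \in undup [seq map fst u.2 | u <- U H].
  by rewrite mem_undup; apply: (map_f (fun u : test O A => map fst u.2) oU).
by case: (undup _).
Qed.

Lemma U_size_gt0 H U (o : O) : (0 < H)%N -> (o, [::]) \in U H -> (0 < U_size H U)%N.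
Proof.
move=> H_gt0 oU; have lt_H : (H.-1 < H)%N by rewrite prednK.
by apply: leq_trans (size_U_le_U_size U lt_H); rewrite prednK //; case: (U H) oU.
Qed.

Lemma q0_neq0 H f U : valid_proc f -> core_test_set H f U 1 -> (0 < H)%N ->
  exists i, test_prob f (tnth (in_tuple (U 1%N)) i) [::] != 0.
Proof.
move=> f_valid [_ [_ U_core]] H_gt0; have [o fo] := valid_proc_support f_valid [::].
have [m m_rep] := U_core (o, [::]) H_gt0.
apply/existsP; apply: contraT => /existsPn q0_eq0; move: fo.
have -> : f [::] o = test_prob f (o, [::]) [::].
  by rewrite /test_prob /= prefix_prob_nil oner_eq0.
rewrite (m_rep [tuple]) (big_tnth _ _ (U 1%N)) big1 ?eqxx // => i _.
by move/negPn/eqP: (q0_eq0 i) => ->; rewrite mulr0.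
Qed.

(* [K_0 = q_0] is a nonzero column, so [X K_0 = 1] and the norm of [X]
   forces [1 <= |U_1| / alpha]. *)
Lemma alpha_le_size_U1 H f U alpha : 0 < alpha -> valid_proc f ->
  core_test_set H f U 1 -> (0 < H)%N -> K0_bound f U (1 / alpha) ->
  alpha <= (size (U 1%N))%:R.
Proof.
move=> alpha_gt0 f_valid U_core H_gt0 [X [[KXK _ _ _] X_le]].
set K := qcols f U 1 _ in KXK.
have [i0 K_i0] := q0_neq0 f_valid U_core H_gt0.
have XK1 : (X *m K) 0 0 = 1.
  have := congr1 (fun M : 'M[R]_(size (U 1%N), 1) => M i0 0) KXK.
  rewrite /= -mulmxA mxE big_ord1 => KXK_i0.
  have K_i0' : K i0 0 != 0 by rewrite /K /qcols mxE.
  by apply: (mulfI K_i0'); rewrite mulr1.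
suff : 1 <= (size (U 1%N))%:R * (1 / alpha) by rewrite mul1r ler_pdivlMr // mul1r.
rewrite -[X in X <= _]XK1 mxE; apply: le_trans (ler_norm _) _.
apply: le_trans (ler_norm_sum _ _ _) _.
apply: (@le_trans _ _ (\sum_(j < size (U 1%N)) (1 / alpha))); last first.
  by rewrite sumr_const card_ord mulr_natl.
apply: ler_sum => j _; rewrite normrM /K /qcols mxE.
case/andP: (test_prob_bounds f_valid (tnth (in_tuple (U 1%N)) j) [::]) => q0 q1.
rewrite (ger0_norm q0); apply: le_trans (ler_piMr _ q1) _ => //.
by apply: le_trans X_le; have := norm11_col_le X j; rewrite big_ord1.
Qed.

Lemma in_qspan_comb f U h (s : seq (test O A)) (w : test O A -> R)
    (m : test O A -> test O A -> R) :
  (forall u, u \in s -> in_qspan f U h (m u)) ->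
  in_qspan f U h (fun v => \sum_(u <- s) w u * m u v).
Proof.
elim: s => [|u s IHs] m_span.
  by exists (fun _ => 0) => v _; rewrite big_nil big1 // => t _; rewrite mul0r.
have [c0 c0_span] := m_span u (mem_head u s).
have [c1 c1_span] : in_qspan f U h (fun v => \sum_(u <- s) w u * m u v).
  by apply: IHs => u' u'_in; apply: m_span; rewrite inE u'_in orbT.
exists (fun t => w u * c0 t + c1 t) => v v_in.
rewrite big_cons c0_span // c1_span // mulr_sumr -big_split.
by apply: eq_bigr => t _ /=; rewrite mulrDl mulrA.
Qed.

End CoreMatrices.

Section Perturbation.
Variables (R : realFieldType) (O A : finType).
Variables (H : nat) (U : nat -> seq (test O A)) (alpha e : R) (f g : proc R O A).
Variables (mf mg : O -> A -> nat -> test O A -> test O A -> R).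
Hypothesis H_gt0 : (0 < H)%N.
Hypothesis alpha_gt0 : 0 < alpha.
Hypothesis f_model : psr_model H U alpha f.
Hypothesis g_valid : valid_proc g.
Hypothesis e_ge0 : 0 <= e.
Hypothesis mf_psr : forall o a h u, (1 <= h <= H.-1)%N -> u \in U h.+1 ->
  psr_m f U h (o, (a, u.1) :: u.2) (mf o a h u).
Hypothesis mg_rep : forall o a h u, (1 <= h <= H.-1)%N -> u \in U h.+1 ->
  represents g U h (o, (a, u.1) :: u.2) (mg o a h u).
Hypothesis m_close : forall o a h u v, (1 <= h <= H.-1)%N -> u \in U h.+1 ->
  v \in U h -> `|mf o a h u v - mg o a h u v| <= e.
Hypothesis q0_close : forall u, u \in U 1%N ->
  `|test_prob f u [::] - test_prob g u [::]| <= e.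

Let UA : R := (UA_size H U)%:R.
Let US : R := (U_size H U)%:R.
(* The error contributed by each step of a history. *)
Let c : R := e * UA * US / alpha.

Let f_valid : valid_proc f. Proof. by case: f_model. Qed.

Lemma UA_ge1 : 1 <= UA.
Proof.
case: f_model => _ _ oU _ _; have [o _] := valid_proc_support f_valid [::].
by rewrite ler1n; apply: UA_size_gt0 H_gt0 (oU o).
Qed.

Lemma e_le_eUA : e <= e * UA.
Proof. by rewrite ler_peMr // UA_ge1. Qed.

Lemma eUA_le_c : e * UA <= c.
Proof.
case: f_model => _ U_core _ K0_le _.
have alpha_le : alpha <= US.
  apply: le_trans (alpha_le_size_U1 alpha_gt0 f_valid (U_core 1%N _) H_gt0 K0_le) _.
    exact: H_gt0.
  by rewrite ler_nat; apply: size_U_le_U_size.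
rewrite /c -mulrA ler_peMr ?mulr_ge0 ?(le_trans ler01 UA_ge1) //.
by rewrite ler_pdivlMr // mul1r.
Qed.

Lemma pinv_bounded_at k : (k <= H.-1)%N -> pinv_bounded f U k.+1 (1 / alpha).
Proof.
case: f_model => _ _ _ K0_le Kh_le; case: k => [|k] k_le; first exact: K0_bound_pinv.
by apply: (Kh_bound_pinv (H := H)); apply: Kh_le; rewrite k_le.
Qed.

Lemma pinv_scaled_sum_le k (x : test O A -> R) : (k < H)%N ->
  (forall u, u \in U k.+1 -> `|x u| <= e * UA) ->
  1 / alpha * \sum_(u <- U k.+1) `|x u| <= c.
Proof.
move=> lt_kH x_le; have -> : c = 1 / alpha * (e * UA * US) by rewrite /c mulrC mul1r.
apply: ler_wpM2l; first by rewrite divr_ge0 ?ler01 ?ltW.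
apply: (@le_trans _ _ (\sum_(u <- U k.+1) e * UA)).
  by rewrite big_seq_cond [leRHS]big_seq_cond; apply: ler_sum => u /andP[/x_le].
rewrite sumr_const_seq -mulr_natr; apply: ler_wpM2l.
  by rewrite mulr_ge0 // (le_trans ler01 UA_ge1).
by rewrite ler_nat size_U_le_U_size.
Qed.

Lemma sum_joint_prob_le h sig : (1 <= h <= H)%N ->
  \sum_(v <- U h) joint_prob g sig v <= UA.
Proof.
move=> h_range; have /andP[h_gt0 h_le] := h_range.
have U_uniq : uniq (U h) by case: f_model => _ U_core _ _ _; case: (U_core h h_range).
apply: le_trans (ler_sum _ (fun v _ => joint_prob_le_test_prob g_valid sig v)) _.
apply: le_trans (sum_test_prob_le_actions sig g_valid U_uniq) _.
have lt_h : (h.-1 < H)%N by rewrite prednK.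
by rewrite ler_nat -(prednK h_gt0) actions_le_UA_size.
Qed.

Lemma joint_prob_diff_step k sig o a u :
  (k.+1 <= H.-1)%N -> size sig = k -> u \in U k.+2 ->
  joint_prob f (rcons sig (o, a)) u - joint_prob g (rcons sig (o, a)) u =
  \sum_(v <- U k.+1) mf o a k.+1 u v * (joint_prob f sig v - joint_prob g sig v) +
  \sum_(v <- U k.+1) (mf o a k.+1 u v - mg o a k.+1 u v) * joint_prob g sig v.
Proof.
move=> k_le sig_size u_in; have h_range : (1 <= k.+1 <= H.-1)%N by [].
rewrite (joint_prob_represents (mf_psr o a h_range u_in).1) //.
rewrite (joint_prob_represents (mg_rep o a h_range u_in)) //.
by rewrite -big_split -sumrB; apply: eq_bigr => v _ /=; ring.
Qed.

Lemma model_error_le k sig o a u : (k.+1 <= H.-1)%N -> u \in U k.+2 ->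
  `|\sum_(v <- U k.+1) (mf o a k.+1 u v - mg o a k.+1 u v) * joint_prob g sig v|
    <= e * UA.
Proof.
move=> k_le u_in; apply: le_trans (ler_norm_sum _ _ _) _.
apply: (@le_trans _ _ (\sum_(v <- U k.+1) e * joint_prob g sig v)).
  rewrite big_seq_cond [leRHS]big_seq_cond; apply: ler_sum => v /andP[v_in _].
  rewrite normrM (ger0_norm (joint_prob_ge0 g_valid sig v)) ler_wpM2r //.
    exact: joint_prob_ge0.
  by apply: m_close; rewrite ?k_le.
rewrite -mulr_sumr ler_wpM2l // sum_joint_prob_le //.
by apply: leq_trans k_le _; rewrite leq_pred.
Qed.

Lemma bounded_on_states_mf k o a u : (k.+1 <= H.-1)%N -> u \in U k.+2 ->
  bounded_on_states f U k (mf o a k.+1 u).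
Proof.
move=> k_le u_in; have h_range : (1 <= k.+1 <= H.-1)%N by [].
have [m_rep m_span] := mf_psr o a h_range u_in; split => // sig.
rewrite -m_rep; case/andP: (test_prob_bounds f_valid (o, (a, u.1) :: u.2) sig).
by move=> t0 t1; rewrite ger0_norm.
Qed.

Lemma bounded_on_states_comb k o a l : (k.+1 <= H.-1)%N ->
  bounded_on_states f U k.+1 l ->
  bounded_on_states f U k (fun v => \sum_(u <- U k.+2) l u * mf o a k.+1 u v).
Proof.
move=> k_le [_ l_le1]; have h_range : (1 <= k.+1 <= H.-1)%N by [].
split; first by apply: in_qspan_comb => u u_in; exact: (mf_psr o a h_range u_in).2.
move=> sig.
have -> : \sum_(v <- U k.+1) (\sum_(u <- U k.+2) l u * mf o a k.+1 u v) * test_prob f v sig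
    = f sig o * \sum_(u <- U k.+2) l u * test_prob f u (rcons sig (o, a)).
  under eq_bigr => v _ do rewrite mulr_suml.
  rewrite exchange_big /= mulr_sumr big_seq [RHS]big_seq; apply: eq_bigr => u u_in.
  under eq_bigr => v _ do rewrite -mulrA.
  by rewrite -mulr_sumr -(mf_psr o a h_range u_in).1 /= test_prob_cons mulrCA.
have sig_size : size (rcons sig (o, a)) == k.+1 by rewrite size_rcons size_tuple.
case/andP: (valid_proc_bounds f_valid sig o) => f0 f1.
by rewrite normrM (ger0_norm f0) mulr_ile1 //; exact: (l_le1 (Tuple sig_size)).
Qed.

Lemma functional_error_le sig : (size sig <= H.-1)%N ->
  forall l, bounded_on_states f U (size sig) l ->
  `|\sum_(u <- U (size sig).+1) l u * (joint_prob f sig u - joint_prob g sig u)|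
    <= (size sig).+1%:R * c.
Proof.
elim/last_ind: sig => [|sig [o a] IHsig] sig_le l l_bdd.
  under eq_bigr => u _ do rewrite !joint_prob_nil.
  apply: le_trans (bounded_on_states_l1 (pinv_bounded_at _) l_bdd _) _ => //.
  rewrite mulr1n [leRHS]mul1r; apply: pinv_scaled_sum_le => // u u_in.
  exact: le_trans (q0_close u_in) e_le_eUA.
move: sig_le l_bdd; rewrite size_rcons; set k := size sig => k_le l_bdd.
have split_err : \sum_(u <- U k.+2) l u *
      (joint_prob f (rcons sig (o, a)) u - joint_prob g (rcons sig (o, a)) u) =
    \sum_(v <- U k.+1) (\sum_(u <- U k.+2) l u * mf o a k.+1 u v) *
      (joint_prob f sig v - joint_prob g sig v) +
    \sum_(u <- U k.+2) l u * \sum_(v <- U k.+1)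
      (mf o a k.+1 u v - mg o a k.+1 u v) * joint_prob g sig v.
  rewrite big_seq.
  under eq_bigr => u u_in do rewrite (joint_prob_diff_step o a k_le erefl u_in) mulrDr.
  rewrite big_split -!big_seq /=; congr (_ + _).
  under [RHS]eq_bigr => v _ do rewrite mulr_suml.
  rewrite [RHS]exchange_big /=; apply: eq_bigr => u _.
  by rewrite mulr_sumr; apply: eq_bigr => v _; rewrite mulrA.
have -> : k.+2%:R * c = k.+1%:R * c + c by rewrite -addn1 natrD mulrDl mul1r.
rewrite split_err; apply: le_trans (ler_normD _ _) _.
apply: lerD; first by apply: IHsig; [exact: ltnW | exact: bounded_on_states_comb].
apply: le_trans (bounded_on_states_l1 (pinv_bounded_at k_le) l_bdd _) _.
apply: pinv_scaled_sum_le; first by apply: leq_ltn_trans k_le _; rewrite ltn_predL.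
by move=> u u_in; apply: model_error_le.
Qed.

Lemma joint_prob_error_le sig u : (size sig <= H.-1)%N -> u \in U (size sig).+1 ->
  `|joint_prob f sig u - joint_prob g sig u| <= (size sig).+1%:R * c.
Proof.
case/lastP: sig => [|sig [o a]] sig_le u_in.
  rewrite !joint_prob_nil mulr1n [leRHS]mul1r; apply: le_trans (q0_close u_in) _.
  exact: le_trans e_le_eUA eUA_le_c.
move: sig_le u_in; rewrite size_rcons => k_le u_in.
have -> : (size sig).+2%:R * c = (size sig).+1%:R * c + c.
  by rewrite -addn1 natrD mulrDl mul1r.
rewrite (joint_prob_diff_step o a k_le erefl u_in).
apply: le_trans (ler_normD _ _) _; apply: lerD.
  by apply: functional_error_le; [exact: ltnW | exact: bounded_on_states_mf].
exact: le_trans (model_error_le sig o a k_le u_in) eUA_le_c.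
Qed.

Lemma prefix_prob_error_le (tau : H.-tuple (O * A)) :
  `|prefix_prob f tau - prefix_prob g tau| <= H%:R * c.
Proof.
case: tau => tau /= /eqP; case/lastP: tau => [|s [o a]] tau_size.
  by move: H_gt0; rewrite -tau_size.
have s_size : size s = H.-1 by rewrite -tau_size size_rcons.
have o_in : (o, [::]) \in U (size s).+1.
  by rewrite s_size prednK //; case: f_model.
have s_le : (size s <= H.-1)%N by rewrite s_size.
rewrite !prefix_prob_rcons_joint.
by have := joint_prob_error_le s_le o_in; rewrite s_size prednK.
Qed.

End Perturbation.

Lemma cover_radius_le (R : realFieldType) (eps alpha : R) (o a h ua us n : nat) :
  0 < eps -> 0 < alpha ->
  (0 < o)%N -> (0 < a)%N -> (0 < h)%N -> (0 < ua)%N -> (0 < us)%N ->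
  h%:R * ((alpha * eps / (8 * o ^ n.+1 * a ^ n * h * ua ^ 2 * us)%:R) *+ 2
          * ua%:R * us%:R / alpha)
    <= eps / (2 * (o ^ n * a ^ n)%:R).
Proof.
move=> eps_gt0 alpha_gt0 o_gt0 a_gt0 h_gt0 ua_gt0 us_gt0.
rewrite [leLHS](_ : _ = eps / (2 * (o ^ n * a ^ n)%:R) / (2 * o * ua)%:R); last first.
  rewrite mulr2n !natrM !natrX exprS; field.
  by rewrite !(mulf_neq0, expf_neq0) ?lt0r_neq0 ?ltr0n.
have oua_gt0 : (0 < 2 * o * ua)%N by rewrite !muln_gt0 o_gt0 ua_gt0.
rewrite ler_pdivrMr ?ltr0n // ler_peMr ?ler1n //.
by rewrite divr_ge0 ?mulr_ge0 // ltW.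
Qed.

Section Bracketing.
Variables (R : realFieldType) (O A : finType) (H : nat) (U : nat -> seq (test O A)).

Lemma bracket_of_prefix_approx (F : proc R O A -> Prop) (eps : R) n
    (r : 'I_n -> proc R O A) : 0 <= eps ->
  (forall f, F f -> exists i, forall tau : H.-tuple (O * A),
     `|prefix_prob f tau - prefix_prob (r i) tau|
       <= eps / (2 * (#|O| ^ H * #|A| ^ H)%:R)) ->
  has_bracket H F eps n.
Proof.
set N := (#|O| ^ H * #|A| ^ H)%N; set del := eps / _ => eps_ge0 r_approx.
have del_ge0 : 0 <= del by rewrite divr_ge0 ?mulr_ge0.
exists (fun i pi tau => traj_prob (r i) pi tau - del),
       (fun i pi tau => traj_prob (r i) pi tau + del); split.
  move=> i pi _; rewrite (eq_bigr (fun=> del *+ 2)) => [|tau _]; last first.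
    by rewrite opprD addrACA subrr add0r -opprD normrN -mulr2n ger0_norm // mulrn_wge0.
  rewrite sumr_const card_tuple card_prod expnMn -/N -mulrnA.
  have [->|N_neq0] := eqVneq N 0%N; first by rewrite muln0 mulr0n.
  by rewrite -mulr_natr natrM divfK // mulf_neq0 ?pnatr_eq0.
move=> f F_f; have [i approx] := r_approx f F_f; exists i => pi pi_valid tau.
rewrite -ler_distl /traj_prob -mulrBr normrM.
case/andP: (policy_prob_bounds pi_valid tau) => p0 p1.
by rewrite (ger0_norm p0); apply: le_trans (ler_piMl (normr_ge0 _) p1) _; exact: approx.
Qed.

Definition near_cover_point (e : R) (mc : O -> A -> test O A -> nat -> test O A -> R)
    (qc : test O A -> R) (f : proc R O A) : Prop :=
  (forall o a h u, (1 <= h <= H.-1)%N -> u \in U h.+1 ->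
     exists m, psr_m f U h (o, (a, u.1) :: u.2) m /\
       forall v, v \in U h -> `|m v - mc o a u h v| <= e) /\
  (forall u, u \in U 1%N -> `|test_prob f u [::] - qc u| <= e).

Lemma near_cover_point_models e mc qc f : near_cover_point e mc qc f ->
  exists mf : O -> A -> nat -> test O A -> test O A -> R,
    forall o a h u, (1 <= h <= H.-1)%N -> u \in U h.+1 ->
      psr_m f U h (o, (a, u.1) :: u.2) (mf o a h u) /\
      forall v, v \in U h -> `|mf o a h u v - mc o a u h v| <= e.
Proof.
case=> m_near _.
have m_ex (x : O * A * nat * test O A) : exists m : test O A -> R,
    let: (o, a, h, u) := x in (1 <= h <= H.-1)%N -> u \in U h.+1 ->
      psr_m f U h (o, (a, u.1) :: u.2) m /\
      forall v, v \in U h -> `|m v - mc o a u h v| <= e.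
  case: x => [[[o a] h] u]; case: (boolP ((1 <= h <= H.-1)%N && (u \in U h.+1))).
    by case/andP=> h_range u_in; have [m ?] := m_near o a h u h_range u_in; exists m.
  by move=> out; exists (fun=> 0) => h_range u_in; rewrite h_range u_in in out.
have [m m_spec] := choice _ m_ex.
by exists (fun o a h u => m (o, a, h, u)) => o a h u; exact: (m_spec (o, a, h, u)).
Qed.

Lemma near_cover_point_prefix_close (alpha e : R) mc qc f g :
  (0 < H)%N -> 0 < alpha -> 0 <= e -> psr_model H U alpha f -> valid_proc g ->
  near_cover_point e mc qc f -> near_cover_point e mc qc g ->
  forall tau : H.-tuple (O * A), `|prefix_prob f tau - prefix_prob g tau|
    <= H%:R * (e *+ 2 * (UA_size H U)%:R * (U_size H U)%:R / alpha).
Proof.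
move=> H_gt0 alpha_gt0 e_ge0 f_model g_valid f_near g_near.
have [mf mf_spec] := near_cover_point_models f_near.
have [mg mg_spec] := near_cover_point_models g_near.
have dist_le x y z : `|x - z| <= e -> `|y - z| <= e -> `|x - y| <= e *+ 2.
  move=> xz yz; rewrite -(subrKA z) mulr2n; apply: le_trans (ler_normD _ _) _.
  by apply: lerD; rewrite // distrC.
apply: (prefix_prob_error_le (mf := mf) (mg := mg)) => //.
- by rewrite mulrn_wge0.
- by move=> o a h u h_range u_in; exact: (mf_spec o a h u h_range u_in).1.
- by move=> o a h u h_range u_in; exact: (mg_spec o a h u h_range u_in).1.1.
- move=> o a h u v h_range u_in v_in.
  by apply: dist_le ((mf_spec _ _ _ _ _ _).2 v v_in) ((mg_spec _ _ _ _ _ _).2 v v_in).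
- by move=> u u_in; apply: dist_le (f_near.2 u u_in) (g_near.2 u u_in).
Qed.

End Bracketing.

Theorem lemma15 (R : realFieldType) (O A : finType) (H : nat) (HH : (0 < H)%N)
    (U : nat -> seq (test O A)) (F : proc R O A -> Prop)
    (fstar : proc R O A) (Hfstar : F fstar)
    (alpha : R) (Halpha : 0 < alpha)
    (HF : forall f, F f -> psr_model H U alpha f)
    (eps : R) (Heps : 0 < eps) :
  forall n : nat,
    has_cover H U F
      (alpha * eps /
        (8 * #|O| ^ H.+1 * #|A| ^ H * H * UA_size H U ^ 2 * U_size H U)%:R) n ->
    has_bracket H F eps n.
Proof.
move=> n [mc [qc cover]]; set e := (alpha * eps / _) in cover.
have [r r_near] := choose_representatives
  (fun i => near_cover_point H U e (mc i) (qc i)) Hfstar.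
apply: (bracket_of_prefix_approx (r := r)); first exact: ltW.
move=> f F_f; have [i f_near] := cover f F_f; have [F_r r_near_i] := r_near f i F_f f_near.
exists i => tau; case: (tnth tau (Ordinal HH)) => o a.
have oU : (o, [::]) \in U H by case: (HF f F_f).
have e_ge0 : 0 <= e by rewrite divr_ge0 // mulr_ge0 // ltW.
have r_valid : valid_proc (r i) by case: (HF _ F_r).
apply: le_trans (near_cover_point_prefix_close HH Halpha e_ge0 (HF f F_f) r_valid
  f_near r_near_i tau) _.
apply: cover_radius_le => //.
- by apply/card_gt0P; exists o.
- by apply/card_gt0P; exists a.
- exact: UA_size_gt0 HH oU.
- exact: U_size_gt0 HH oU.
Qed.
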